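(* Let $G=(V,E)$ be a finite graph and let $\underline{r}^G=(r_v)_{v\in V}\in\mathbb{Z}^{V}$. Let $H$ be an arbitrary $2$-cover of $G$, and let $G\cup G$ denote the disjoint union of two copies of $G$ (itself a $2$-cover of $G$). Let $\underline{r}$ denote the vector induced by $\underline{r}^G$ on $H$ and on $G\cup G$, i.e. each lift $u'$ of a vertex $u\in V$ gets value $r_{u'}=r_u$. Then $$\varepsilon_{\underline{r}}(G\cup G)\geq \varepsilon_{\underline{r}}(H).$$ In other words, for any $\underline{r}\in\mathbb{Z}^{V}$, among all $2$-covers $H$ of $G$ the quantity $\varepsilon_{\underline{r}}(H)$ is maximized by $G\cup G$.
   Context: A $2$-cover of $G$ is a graph with vertex set $V\times\{0,1\}$ obtained by choosing, for every edge $uv\in E$, either the pair of edges $(u,0)(v,0),(u,1)(v,1)$ or the pair $(u,0)(v,1),(u,1)(v,0)$, and having no other edges. For a graph $F$ and a vector $\underline{r}=(r_v)\in\mathbb{Z}^{V(F)}$, $\varepsilon_{\underline{r}}(F)$ denotes the number of orientations of $F$ in which every vertex $v$ has in-degree exactly $r_v$. *)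

From mathcomp Require Import all_boot all_order all_algebra.
Set Implicit Arguments. Unset Strict Implicit. Unset Printing Implicit Defensive.

Definition simple_graph (T : finType) (e : rel T) : Prop :=
  symmetric e /\ irreflexive e.

(* An orientation of the graph (T, h): a set d of ordered pairs (x,y),
   meaning "edge xy oriented from x to y", such that every ordered pair in d
   is an edge, and each edge {x,y} is oriented in exactly one direction. *)
Definition is_orientation (T : finType) (h : rel T) (d : {ffun T * T -> bool}) : bool :=
  [forall x, forall y, (d (x, y) ==> h x y) && (h x y ==> (d (x, y) != d (y, x)))].

Definition indeg (T : finType) (d : {ffun T * T -> bool}) (v : T) : nat :=
  #|[set u | d (u, v)]|.

Definition eps (T : finType) (h : rel T) (r : T -> int) : nat :=
  #|[set d : {ffun T * T -> bool} |
      is_orientation h d && [forall v, Posz (indeg d v) == r v]]|.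

Definition is_two_cover (V : finType) (e : rel V) (h : rel (V * bool)) : Prop :=
  symmetric h /\
  (forall x y : V * bool, h x y -> e x.1 y.1) /\
  (forall u v : V, e u v ->
     (h (u, false) (v, false) && h (u, true) (v, true)
      && ~~ h (u, false) (v, true) && ~~ h (u, true) (v, false))
     || (h (u, false) (v, true) && h (u, true) (v, false)
      && ~~ h (u, false) (v, false) && ~~ h (u, true) (v, true))).

Definition two_copies (V : finType) (e : rel V) : rel (V * bool) :=
  fun x y => e x.1 y.1 && (x.2 == y.2).

Definition lift_vec (V : finType) (r : V -> int) : V * bool -> int :=
  fun x => r x.1.

(* Write a 2-cover of G as the twisted cover in which the two lifts of an edge
   uv join (u, b) to (v, b + c uv) for a symmetric twist c (c = 0 gives G u G),
   and record an orientation of it by its in-flow: for every pair (u, v) of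
   adjacent vertices, which of the two lifted edges above uv enter the lifts
   (u, 0) and (u, 1). Orientations then become assignments of pairs of booleans
   subject to a consistency constraint on each edge and an in-degree constraint
   at each vertex of G. Expanding every edge constraint in the basis
   [x = (0,0)], [x = (1,1)], [x.1 != x.2], x.1 - x.2 of functions of a pair of
   booleans turns 2^|E| times the count into a sum of products of edge
   coefficients and local vertex sums, and twisting an edge only flips the sign
   of the coefficient of (x.1 - x.2)(x'.1 - x'.2). A vertex sum is a middle
   coefficient of X^a (X + 1)^p (X - 1)^m, where m counts the neighbours
   labelled x.1 - x.2; as this polynomial is (-1)^m-palindromic, that
   coefficient vanishes for odd m and has the sign of (-1)^(m/2) otherwise.
   These signs cancel those of the untwisted edge coefficients, so every term of
   the untwisted expansion is nonnegative and dominates the corresponding term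
   for any other twist. *)

From mathcomp Require Import all_boot all_order all_algebra.
From mathcomp Require Import zify ring.
Set Implicit Arguments. Unset Strict Implicit. Unset Printing Implicit Defensive.
Import Order.TTheory GRing.Theory Num.Theory.
Local Open Scope ring_scope.

(** * Sign-palindromic polynomials *)

Section SignPalindromic.
Variable R : comNzRingType.

Definition sign_palindromic (n : nat) (s : R) (a : {poly R}) : Prop :=
  (size a <= n.+1)%N /\ forall i, (i <= n)%N -> a`_(n - i) = s * a`_i.

Lemma sign_palindromic1 : sign_palindromic 0 1 1.
Proof. by split=> [|[|]//]; rewrite ?size_poly1 ?mul1r. Qed.

Lemma sign_palindromicMXaddC n s c a : c * c = 1 ->
  sign_palindromic n s a -> sign_palindromic n.+1 (c * s) (('X + c%:P) * a).
Proof.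
move=> cc [size_a pal_a].
have a_hi : a`_n.+1 = 0 by apply: nth_default.
have coef0 : (('X + c%:P) * a)`_0 = c * a`_0.
  by rewrite mulrDl coefD coefXM coefCM add0r.
have coefS j : (('X + c%:P) * a)`_j.+1 = a`_j + c * a`_j.+1.
  by rewrite mulrDl coefD coefXM coefCM.
split=> [|[_|i le_in]].
- by apply: leq_trans (size_polyMleq _ _) _; rewrite size_XaddC.
- rewrite subn0 coefS coef0 a_hi mulr0 addr0 -{1}(subn0 n) pal_a //.
  by transitivity (c * c * (s * a`_0)); [rewrite cc mul1r | ring].
rewrite subSS coefS; have [lt_in|] := ltnP i n.
  rewrite -subnSK // coefS subnSK // !pal_a //.
  by transitivity (s * a`_i.+1 * (c * c) + c * (s * a`_i)); [rewrite cc mulr1 | ring].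
move=> le_ni; have -> : i = n by apply/eqP; rewrite eqn_leq le_ni -ltnS le_in.
by rewrite subnn coef0 -{1}(subnn n) pal_a // a_hi mulr0 addr0; ring.
Qed.

End SignPalindromic.

Lemma sign_palindromic_XaddB1 (R : comNzRingType) p m :
  sign_palindromic (p + m) ((-1) ^+ m) (('X + 1) ^+ p * ('X - 1) ^+ m : {poly R}).
Proof.
have XB1 : 'X - 1 = 'X + (-1)%:P :> {poly R} by rewrite polyCN polyC1.
elim: p => [|p IHp].
  rewrite expr0 mul1r; elim: m => [|m IHm]; first exact: sign_palindromic1.
  by rewrite !exprS XB1; apply: sign_palindromicMXaddC; rewrite ?mulrNN ?mulr1 -?XB1.
have := sign_palindromicMXaddC (mulr1 1) IHp.
by rewrite polyC1 mul1r mulrA -exprS.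
Qed.

Lemma sign_palindromic_sqr_coef_ge0 (R : realDomainType) n s (a : {poly R}) :
  sign_palindromic n s a -> 0 <= s * (a * a)`_n.
Proof.
move=> [_ pal_a]; rewrite coefM mulr_sumr; apply: sumr_ge0 => -[j /= lt_jn] _.
have -> : s * (a`_j * a`_(n - j)) = s ^+ 2 * a`_j ^+ 2 by rewrite pal_a //; ring.
by rewrite mulr_ge0 ?sqr_ge0.
Qed.

Lemma sign_palindromic_mid_coef (R : numDomainType) n (a : {poly R}) :
  sign_palindromic n.*2 (-1) a -> a`_n = 0.
Proof.
move=> [_ pal_a]; have := pal_a n; rewrite -addnn addnK leq_addr mulN1r => /(_ isT) /eqP.
by rewrite -addr_eq0 -mulr2n mulrn_eq0 => /eqP.
Qed.

Lemma coef_mid_XaddB1_odd (R : numDomainType) p m k : (p + m)%N = k.*2 -> odd m ->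
  (('X + 1) ^+ p * ('X - 1) ^+ m : {poly R})`_k = 0.
Proof.
move=> pm_eq odd_m; apply: sign_palindromic_mid_coef.
by have := sign_palindromic_XaddB1 R p m; rewrite -signr_odd odd_m expr1 pm_eq.
Qed.

Lemma coef_mid_XaddB1_ge0 (R : realDomainType) p m k : (p + m)%N = k.*2 ->
  0 <= (-1) ^+ m./2 * (('X + 1) ^+ p * ('X - 1) ^+ m : {poly R})`_k.
Proof.
move=> pm_eq; have [odd_m|even_m] := boolP (odd m).
  by rewrite (coef_mid_XaddB1_odd _ pm_eq) // mulr0.
have even_p : ~~ odd p.
  by move: (congr1 odd pm_eq); rewrite oddD odd_double (negbTE even_m) addbF => ->.
have [p2 m2] := (odd_double_half p, odd_double_half m).
rewrite (negbTE even_p) (negbTE even_m) !add0n in p2 m2.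
have -> : k = (p./2 + m./2)%N by apply: double_inj; rewrite doubleD p2 m2.
have -> : ('X + 1) ^+ p * ('X - 1) ^+ m =
    (('X + 1) ^+ p./2 * ('X - 1) ^+ m./2) ^+ 2 :> {poly R}.
  by rewrite -{1}p2 -{1}m2 -!addnn !exprD; ring.
exact/sign_palindromic_sqr_coef_ge0/sign_palindromic_XaddB1.
Qed.

(** * Flows on a pair of lifts *)

Lemma forallb_bool (P : pred bool) : [forall b, P b] = P false && P true.
Proof. by apply/forallP/andP => [? | [? ?] []]. Qed.

Lemma sum_bool2 (R : nmodType) (F : bool * bool -> R) :
  \sum_t F t = F (true, true) + F (true, false) + (F (false, true) + F (false, false)).
Proof.
rewrite (eq_bigr (fun t => F (t.1, t.2))) => [|[] //].
by rewrite -(pair_big xpredT xpredT (fun b b' => F (b, b'))) /= !big_bool.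
Qed.

Lemma andb_natr (R : pzSemiRingType) (a b : bool) : (a && b)%:R = a%:R * b%:R :> R.
Proof. by case: a; rewrite ?mul1r ?mul0r. Qed.

Lemma forall_natr (R : comPzSemiRingType) (T : finType) (P : pred T) :
  [forall i, P i]%:R = \prod_i (P i)%:R :> R.
Proof.
have [/forallP all_P | /forallPn[i /negbTE not_Pi]] := boolP [forall i, P i].
  by rewrite big1 // => i _; rewrite all_P.
by rewrite (bigD1 i) //= not_Pi mul0r.
Qed.

Lemma sum_ffun_prod_rows (I J T : finType) (R : comPzSemiRingType)
    (G : I -> {ffun J -> T} -> R) :
  \sum_(y : {ffun I * J -> T}) \prod_i G i [ffun j => y (i, j)] =
  \prod_i \sum_(z : {ffun J -> T}) G i z.
Proof.
rewrite bigA_distr_bigA /=.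
pose rows (y : {ffun I * J -> T}) := [ffun i => [ffun j => y (i, j)]].
pose glue (Y : {ffun I -> {ffun J -> T}}) := [ffun p : I * J => Y p.1 p.2].
rewrite (reindex rows); last first.
  by exists glue => [y _ | Y _]; apply/ffunP; [case=> i j | move=> i; apply/ffunP => j];
    rewrite !ffunE.
by apply: eq_bigr => y _; apply: eq_bigr => i _; rewrite ffunE.
Qed.

Definition at_lift (b : bool) (x : bool * bool) : bool := if b then x.2 else x.1.

Definition edge_ok (k : bool) (x x' : bool * bool) : bool :=
  [forall b, at_lift b x != at_lift (b (+) k) x'].

Definition flow_basis (t x : bool * bool) : int :=
  match t with
  | (false, false) => (x == (false, false))%:R
  | (false, true) => (x == (true, true))%:R
  | (true, false) => (x.1 != x.2)%:R
  | (true, true) => x.1%:R - x.2%:R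
  end.

Definition edge_coef (k : bool) (t t' : bool * bool) : int :=
  match t, t' with
  | (false, false), (false, true) | (false, true), (false, false) => 2
  | (true, false), (true, false) => 1
  | (true, true), (true, true) => if k then 1 else -1
  | _, _ => 0
  end.

Lemma edge_ok_expand k x x' : (edge_ok k x x')%:R * 2 =
  \sum_t \sum_t' edge_coef k t t' * flow_basis t x * flow_basis t' x'.
Proof.
rewrite /edge_ok forallb_bool !sum_bool2.
by case: k; case: x => [[] []]; case: x' => [[] []]; vm_compute.
Qed.

Definition flow_weight (t : bool * bool) : nat :=
  ((t == (false, true)).*2 + (t == (true, false)) + (t == (true, true)))%N.

Lemma flow_basis_neq0 t x : flow_basis t x != 0 -> (x.1 + x.2)%N = flow_weight t.
Proof. by case: t => [[] []]; case: x => [[] []]. Qed.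

Lemma flow_basis_genpoly t :
  \sum_x (flow_basis t x)%:P * 'X^(x.1) =
  'X^(t == (false, true)) * (('X + 1) ^+ (t == (true, false)) * ('X - 1) ^+ (t == (true, true)))
  :> {poly int}.
Proof.
by rewrite sum_bool2; case: t => [[] []] /=; rewrite ?polyC0 ?polyC1 ?polyCN; ring.
Qed.

Section VertexSum.
Variable I : finType.

Definition vertex_ok (rw : int) (z : {ffun I -> bool * bool}) : bool :=
  [forall b, #|[set i | at_lift b (z i)]|%:Z == rw].

Definition vertex_sum (th : I -> bool * bool) (rw : int) : int :=
  \sum_(z : {ffun I -> bool * bool}) (\prod_i flow_basis (th i) (z i)) * (vertex_ok rw z)%:R.

Definition label_count (th : I -> bool * bool) (t : bool * bool) : nat :=
  \sum_i (th i == t : nat).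

Lemma vertex_sum_Negz th n : vertex_sum th (Negz n) = 0.
Proof. by rewrite /vertex_sum big1 // => z _; rewrite /vertex_ok forallb_bool mulr0. Qed.

Lemma vertex_sumE th (n : nat) :
  let D := label_count th (false, true) in
  let p := label_count th (true, false) in
  let m := label_count th (true, true) in
  vertex_sum th n =
  ((D.*2 + p + m)%N == n.*2)%:R * ('X^D * (('X + 1) ^+ p * ('X - 1) ^+ m) : {poly int})`_n.
Proof.
move=> D p m.
pose flow (z : {ffun I -> bool * bool}) := \prod_i flow_basis (th i) (z i).
pose lift_count b (z : {ffun I -> bool * bool}) := (\sum_i at_lift b (z i))%N.
have card_lift_count b (z : {ffun I -> bool * bool}) :
    #|[set i | at_lift b (z i)]| = lift_count b z.
  by rewrite -sum1dep_card big_mkcond; apply: eq_bigr => i _; case: at_lift.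
have lift_count_tot z :
    flow z != 0 -> (lift_count false z + lift_count true z = D.*2 + p + m)%N.
  move=> /prodf_neq0 flow_z; rewrite -big_split /D /p /m /label_count.
  rewrite (big_morph double doubleD double0) -!big_split /=.
  by apply: eq_bigr => i _; apply: flow_basis_neq0; apply: flow_z.
have -> : vertex_sum th n =
    ((D.*2 + p + m)%N == n.*2)%:R * \sum_z flow z * (lift_count false z == n)%:R.
  rewrite mulr_sumr; apply: eq_bigr => z _.
  rewrite /vertex_ok forallb_bool !card_lift_count -/(flow z).
  have [->|/lift_count_tot tot] := eqVneq (flow z) 0; first by rewrite !mul0r mulr0.
  rewrite mulrCA -andb_natr; congr (_ * (nat_of_bool _)%:R).
  by apply/idP/idP => /andP[/eqP ? /eqP ?]; apply/andP; split; apply/eqP; lia.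
congr (_ * _).
have -> : 'X^D * (('X + 1) ^+ p * ('X - 1) ^+ m) =
    \prod_i \sum_x (flow_basis (th i) x)%:P * 'X^(x.1) :> {poly int}.
  rewrite /D /p /m /label_count -!prodrXr -!big_split /=.
  by apply: eq_bigr => i _; rewrite flow_basis_genpoly.
rewrite bigA_distr_bigA coef_sum; apply: eq_bigr => z _.
by rewrite big_split /= prodrXr -rmorph_prod coefCM coefXn eq_sym.
Qed.

Lemma vertex_sum_odd th rw : odd (label_count th (true, true)) -> vertex_sum th rw = 0.
Proof.
case: rw => [n|n] odd_m; last exact: vertex_sum_Negz.
rewrite vertex_sumE /=; set D := label_count th (false, true).
have [tot|] := eqVneq (D.*2 + _ + _)%N n.*2; last by rewrite mul0r.
rewrite coefXnM ifF; last by apply/negbTE; rewrite -leqNgt; lia.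
by rewrite (coef_mid_XaddB1_odd _ (_ : _ = (n - D).*2)) ?mulr0 //; lia.
Qed.

Lemma vertex_sum_sign th rw :
  0 <= (-1) ^+ (label_count th (true, true))./2 * vertex_sum th rw.
Proof.
case: rw => [n|n]; last by rewrite vertex_sum_Negz mulr0.
rewrite vertex_sumE /=; set D := label_count th (false, true).
have [tot|] := eqVneq (D.*2 + _ + _)%N n.*2; last by rewrite mul0r mulr0.
rewrite mul1r coefXnM ifF; last by apply/negbTE; rewrite -leqNgt; lia.
by apply: coef_mid_XaddB1_ge0; lia.
Qed.

End VertexSum.

(** * Orientations of twisted covers as in-flows *)

Lemma eq_eps (T : finType) (h h' : rel T) (r : T -> int) : h =2 h' -> eps h r = eps h' r.
Proof.
move=> eq_h; apply: eq_card => d; rewrite !inE /is_orientation.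
by congr (_ && _); apply: eq_forallb => x; apply: eq_forallb => y; rewrite eq_h.
Qed.

Lemma orientation_sub (T : finType) (h : rel T) d x y :
  is_orientation h d -> d (x, y) -> h x y.
Proof. by move=> /forallP/(_ x)/forallP/(_ y)/andP[/implyP]. Qed.

Lemma orientation_antisym (T : finType) (h : rel T) d x y :
  is_orientation h d -> h x y -> d (x, y) != d (y, x).
Proof. by move=> /forallP/(_ x)/forallP/(_ y)/andP[_ /implyP]. Qed.

Section TwistedCover.
Variables (V : finType) (e : rel V).

Definition twisted_cover (c : V -> V -> bool) : rel (V * bool) :=
  fun x y => e x.1 y.1 && (y.2 == x.2 (+) c x.1 y.1).

Lemma two_copies_untwisted : two_copies e =2 twisted_cover (fun _ _ => false).
Proof. by move=> x y; rewrite /two_copies /twisted_cover addbF eq_sym. Qed.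

Lemma two_cover_twisted h : is_two_cover e h ->
  exists2 c : V -> V -> bool, (forall u v, c u v = c v u) & h =2 twisted_cover c.
Proof.
move=> [h_sym [h_e h_cover]]; exists (fun u v => h (u, false) (v, true)).
  move=> u v; rewrite [RHS]h_sym.
  have [/h_cover|not_uv] := boolP (e u v).
    by case: (h (u, false) (v, true)); case: (h (u, true) (v, false)); rewrite ?andbF.
  by apply/idP/idP => /h_e; rewrite (negbTE not_uv).
move=> [u b] [v b']; rewrite /twisted_cover /=.
have [/h_cover|not_uv] := boolP (e u v); last by apply/negP => /h_e; rewrite (negbTE not_uv).
by case: b; case: b'; case: (h (u, false) (v, false)); case: (h (u, true) (v, true));
  case: (h (u, false) (v, true)); case: (h (u, true) (v, false)).
Qed.

End TwistedCover.

Section Inflow.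
Variables (V : finType) (e : rel V) (r : V -> int).
Hypotheses (e_sym : symmetric e) (e_irr : irreflexive e).

Local Notation flowmap := {ffun V * V -> bool * bool}.

Definition swap (a : V * V) : V * V := (a.2, a.1).

Lemma swapK : involutive swap. Proof. by case. Qed.

Definition canon_edge (a : V * V) : bool := e a.1 a.2 && (enum_rank a.1 < enum_rank a.2)%N.

Lemma canon_edge_swap a : canon_edge a -> ~~ canon_edge (swap a).
Proof. by case/andP => _ lt_a; apply/nandP; right; rewrite -leqNgt ltnW. Qed.

Lemma edge_canon u v : e u v -> canon_edge (u, v) || canon_edge (v, u).
Proof.
move=> uv; rewrite /canon_edge /= uv e_sym uv /=.
case: ltngtP => // /val_inj/enum_rank_inj eq_uv.
by move: uv; rewrite eq_uv e_irr.
Qed.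

Definition inflow_ok (c : V -> V -> bool) (y : flowmap) : bool :=
  [&& [forall a, canon_edge a ==> edge_ok (c a.1 a.2) (y a) (y (swap a))],
      [forall a, ~~ e a.1 a.2 ==> (y a == (false, false))] &
      [forall w, vertex_ok (r w) [ffun v => y (w, v)]]].

Section Bijection.
Variable c : V -> V -> bool.
Hypothesis c_sym : forall u v, c u v = c v u.

Definition inflow (d : {ffun (V * bool) * (V * bool) -> bool}) : flowmap :=
  [ffun a => (d ((a.2, c a.1 a.2), (a.1, false)), d ((a.2, ~~ c a.1 a.2), (a.1, true)))].

Definition orientation_of_inflow (y : flowmap) :
  {ffun (V * bool) * (V * bool) -> bool} :=
  [ffun p => twisted_cover e c p.1 p.2 && at_lift p.2.2 (y (p.2.1, p.1.1))].

Lemma at_lift_inflow d u v b : at_lift b (inflow d (u, v)) = d ((v, b (+) c u v), (u, b)).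
Proof. by case: b; rewrite ffunE. Qed.

Lemma twisted_coverE v b' u b :
  twisted_cover e c (v, b') (u, b) = e u v && (b' == b (+) c u v).
Proof.
rewrite /twisted_cover /= e_sym c_sym; congr (_ && _).
by case: b; case: b'; case: (c u v).
Qed.

Lemma indeg_twisted d u b : is_orientation (twisted_cover e c) d ->
  indeg d (u, b) = #|[set v | d ((v, b (+) c u v), (u, b))]|.
Proof.
move=> o_d; rewrite /indeg -(card_imset _ (f := fun v => (v, b (+) c u v))); last by move=> ? ? [].
apply: eq_card => -[v b']; rewrite inE; apply/idP/imsetP => [d_vu | [v' v'_in [-> ->]]].
  have := orientation_sub o_d d_vu; rewrite twisted_coverE => /andP[_ /eqP eq_b'].
  by exists v; rewrite ?inE -?eq_b'.
by rewrite inE in v'_in.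
Qed.

Lemma inflow_ok_inflow d : is_orientation (twisted_cover e c) d ->
  [forall x, Posz (indeg d x) == lift_vec r x] -> inflow_ok c (inflow d).
Proof.
move=> o_d /forallP indeg_d; apply/and3P; split.
- apply/forallP => -[u v]; apply/implyP => /andP[/= uv _].
  apply/forallP => b; rewrite at_lift_inflow /swap /= at_lift_inflow c_sym addbK.
  by apply: orientation_antisym o_d _; rewrite twisted_coverE uv c_sym eqxx.
- apply/forallP => -[u v]; apply/implyP => /= not_uv.
  rewrite ffunE; apply/eqP; congr (_, _); apply/negbTE/negP => /(orientation_sub o_d);
  by rewrite twisted_coverE (negbTE not_uv).
apply/forallP => w; apply/forallP => b.
have := indeg_d (w, b); rewrite indeg_twisted // /lift_vec /= => /eqP <-.
by apply/eqP; congr (Posz _); apply: eq_card => v; rewrite !inE ffunE at_lift_inflow.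
Qed.

Lemma orientation_of_inflow_ok y : inflow_ok c y ->
  is_orientation (twisted_cover e c) (orientation_of_inflow y) &&
  [forall x, Posz (indeg (orientation_of_inflow y) x) == lift_vec r x].
Proof.
move=> /and3P[/forallP y_edge /forallP y_nonedge /forallP y_vertex].
have o_y : is_orientation (twisted_cover e c) (orientation_of_inflow y).
  apply/forallP => -[v b']; apply/forallP => -[u b]; apply/andP; split.
    by apply/implyP; rewrite ffunE => /andP[].
  apply/implyP; rewrite twisted_coverE => /andP[uv /eqP ->].
  rewrite !ffunE /= !twisted_coverE uv e_sym uv (c_sym v u) addbK !eqxx /=.
  have /orP[can_uv|can_vu] := edge_canon uv.
    by have /implyP/(_ can_uv)/forallP/(_ b) := y_edge (u, v).
  have /implyP/(_ can_vu)/forallP/(_ (b (+) c u v)) := y_edge (v, u).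
  by rewrite /swap /= (c_sym v u) addbK eq_sym.
rewrite o_y; apply/forallP => -[u b]; rewrite indeg_twisted // /lift_vec /=.
rewrite -(eqP (forallP (y_vertex u) b)); apply/eqP; congr (Posz _); apply: eq_card => v.
rewrite !inE !ffunE /= twisted_coverE eqxx andbT.
have [//|not_uv] := boolP (e u v).
by have /implyP/(_ not_uv)/eqP -> := y_nonedge (u, v); case: b.
Qed.

Lemma inflowK d : is_orientation (twisted_cover e c) d -> orientation_of_inflow (inflow d) = d.
Proof.
move=> o_d; apply/ffunP => -[[v b'] [u b]]; rewrite ffunE /= at_lift_inflow.
have [|not_vu] := boolP (twisted_cover e c (v, b') (u, b)).
  by rewrite twisted_coverE => /andP[_ /eqP ->].
by apply/esym/negP => /(orientation_sub o_d); rewrite (negbTE not_vu).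
Qed.

Lemma orientation_of_inflowK y : inflow_ok c y -> inflow (orientation_of_inflow y) = y.
Proof.
move=> /and3P[_ /forallP y_nonedge _]; apply/ffunP => -[u v].
have -> : y (u, v) = (at_lift false (y (u, v)), at_lift true (y (u, v))) by case: (y _).
rewrite ffunE !ffunE /= !twisted_coverE !eqxx !andbT.
have [//|not_uv] := boolP (e u v).
by have /implyP/(_ not_uv)/eqP -> := y_nonedge (u, v).
Qed.

Lemma eps_twisted_cover : eps (twisted_cover e c) (lift_vec r) = #|[set y | inflow_ok c y]|.
Proof.
rewrite /eps -(card_in_imset (f := inflow)); last first.
  move=> d1 d2; rewrite !inE => /andP[o_d1 _] /andP[o_d2 _] eq_d.
  by rewrite -(inflowK o_d1) eq_d inflowK.
apply: eq_card => y; rewrite inE; apply/imsetP/idP => [[d] | y_ok].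
  by rewrite inE => /andP[o_d indeg_d] ->; apply: inflow_ok_inflow.
by exists (orientation_of_inflow y); rewrite ?inE ?orientation_of_inflow_ok ?orientation_of_inflowK.
Qed.

End Bijection.

(** * Expansion of the in-flow count *)

(* [t1 a] and [t2 a] are the basis indices chosen at the two ends of a canonical
   edge [a]; the factor of any other pair forces both indices to be (0,0). *)
Definition label (t1 t2 : flowmap) (a : V * V) : bool * bool :=
  if canon_edge a then t1 a else if canon_edge (swap a) then t2 (swap a) else (false, false).

Definition edge_weight (c : V -> V -> bool) (a : V * V) (t t' : bool * bool) : int :=
  if canon_edge a then edge_coef (c a.1 a.2) t t'
  else ((t == (false, false)) && (t' == (false, false)))%:R.

Definition expansion_term (c : V -> V -> bool) (t1 t2 : flowmap) : int :=
  (\prod_a edge_weight c a (t1 a) (t2 a)) *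
  \prod_w vertex_sum (fun v => label t1 t2 (w, v)) (r w).

Lemma prod_flow_basis_label (t1 t2 y : flowmap) :
  \prod_a (if canon_edge a then flow_basis (t1 a) (y a) * flow_basis (t2 a) (y (swap a))
           else (~~ e a.1 a.2 ==> (y a == (false, false)))%:R) =
  \prod_a flow_basis (label t1 t2 a) (y a).
Proof.
rewrite (eq_bigr (fun a =>
    (if canon_edge a then flow_basis (t1 a) (y a)
     else (~~ e a.1 a.2 ==> (y a == (false, false)))%:R) *
    (if canon_edge a then flow_basis (t2 a) (y (swap a)) else 1))); last first.
  by move=> a _; case: ifP; rewrite ?mulr1.
rewrite big_split /= [X in _ * X](reindex_inj (can_inj swapK)) -big_split /=.
apply: eq_bigr => a _; rewrite swapK /label.
have [can_a|not_can_a] := boolP (canon_edge a).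
  by rewrite (negbTE (canon_edge_swap can_a)) mulr1.
have [can_sa|not_can_sa] := boolP (canon_edge (swap a)).
  by move: can_sa => /andP[/= ea _]; rewrite e_sym ea mul1r.
have not_ea : ~~ e a.1 a.2.
  by apply/negP => /edge_canon; case: a not_can_a not_can_sa => u v /negbTE-> /negbTE->.
by rewrite not_ea mulr1; case: (y a) => [[] []].
Qed.

Lemma inflow_ok_expand c y :
  (inflow_ok c y)%:R * 2 ^+ #|[set a | canon_edge a]| =
  \sum_(t1 : flowmap) \sum_(t2 : flowmap) (\prod_a edge_weight c a (t1 a) (t2 a)) *
    (\prod_a flow_basis (label t1 t2 a) (y a)) *
    \prod_w (vertex_ok (r w) [ffun v => y (w, v)])%:R.
Proof.
under [RHS]eq_bigr => t1 _ do rewrite -mulr_suml.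
rewrite -mulr_suml /inflow_ok !andb_natr !forall_natr mulrA mulrAC; congr (_ * _).
have -> : 2 ^+ #|[set a | canon_edge a]| = \prod_a (if canon_edge a then 2 else 1) :> int.
  by rewrite -big_mkcond -prodr_const; apply: eq_bigl => a; rewrite inE.
rewrite -!big_split /=.
pose L a t t' : int := if canon_edge a then flow_basis t (y a) * flow_basis t' (y (swap a))
                       else (~~ e a.1 a.2 ==> (y a == (false, false)))%:R.
transitivity (\prod_a \sum_t \sum_t' edge_weight c a t t' * L a t t').
  apply: eq_bigr => a _; rewrite /edge_weight /L; case: (boolP (canon_edge a)) => [can_a|_].
    rewrite (andP can_a).1 /= mulr1 edge_ok_expand.
    by under eq_bigr do under eq_bigr do rewrite mulrA.
  by rewrite /= mul1r mulr1 sum_bool2 !sum_bool2 /= !mul0r !add0r mul1r.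
rewrite bigA_distr_bigA; apply: eq_bigr => t1 _.
rewrite bigA_distr_bigA; apply: eq_bigr => t2 _.
by rewrite big_split /= prod_flow_basis_label.
Qed.

Lemma sum_inflow_ok c :
  (#|[set y | inflow_ok c y]|%:R : int) * 2 ^+ #|[set a | canon_edge a]| =
  \sum_(t1 : flowmap) \sum_(t2 : flowmap) expansion_term c t1 t2.
Proof.
rewrite -sum1dep_card natr_sum mulr_suml big_mkcond /=.
rewrite (eq_bigr (fun y => (inflow_ok c y)%:R * 2 ^+ #|[set a | canon_edge a]|)); last first.
  by move=> y _; case: inflow_ok; rewrite ?mul0r.
under eq_bigr => y _ do rewrite inflow_ok_expand.
rewrite exchange_big; apply: eq_bigr => t1 _.
rewrite exchange_big; apply: eq_bigr => t2 _.
under eq_bigr => y _ do rewrite -mulrA.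
rewrite -mulr_sumr /expansion_term /vertex_sum -(sum_ffun_prod_rows (fun w z =>
  \prod_v flow_basis (label t1 t2 (w, v)) (z v) * (vertex_ok (r w) z)%:R)).
congr (_ * _); apply: eq_bigr => y _; rewrite big_split /=; congr (_ * _).
rewrite pair_big /=; apply: eq_bigr => -[w v] _; by rewrite ffunE.
Qed.

Local Notation untwisted := (fun _ _ : V => false).

Lemma edge_weight_twist c a t t' : edge_weight c a t t' =
  edge_weight untwisted a t t' * (-1) ^+ [&& canon_edge a, c a.1 a.2 & t == (true, true)].
Proof.
rewrite /edge_weight; case: canon_edge; last by rewrite mulr1.
by case: (c _ _); case: t => [[] []]; case: t' => [[] []].
Qed.

Lemma edge_weight_untwisted_sign a t t' :
  0 <= (-1) ^+ (canon_edge a && (t == (true, true))) * edge_weight untwisted a t t'.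
Proof.
rewrite /edge_weight; case: canon_edge; last by rewrite mul1r; case: (_ && _).
by case: t => [[] []]; case: t' => [[] []].
Qed.

Lemma edge_weight_neq0_diff a t t' : canon_edge a ->
  edge_weight untwisted a t t' != 0 -> (t == (true, true)) = (t' == (true, true)).
Proof. by rewrite /edge_weight => ->; case: t => [[] []]; case: t' => [[] []]. Qed.

Lemma sum_label_count_diff (t1 t2 : flowmap) :
  (forall a, edge_weight untwisted a (t1 a) (t2 a) != 0) ->
  (\sum_w label_count (fun v => label t1 t2 (w, v)) (true, true) =
   (\sum_a (canon_edge a && (t1 a == (true, true)) : nat)).*2)%N.
Proof.
move=> weight_neq0; rewrite /label_count pair_big /=.
transitivity (\sum_a ((canon_edge a && (t1 a == (true, true)) : nat) +
                      (canon_edge (swap a) && (t2 (swap a) == (true, true)) : nat)))%N.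
  apply: eq_bigr => -[w v] _; rewrite /label.
  have [can_a|_] := boolP (canon_edge (w, v)); last by case: canon_edge.
  by rewrite (negbTE (canon_edge_swap can_a)) addn0.
rewrite big_split /= [X in (_ + X)%N](reindex_inj (can_inj swapK)) /= -addnn.
congr (_ + _)%N; apply: eq_bigr => a _; rewrite swapK.
have [can_a|//] := boolP (canon_edge a).
by rewrite /= (edge_weight_neq0_diff can_a (weight_neq0 a)).
Qed.

(* An edge labelled (1,1) has a negative untwisted coefficient and adds 2 to the
   total number of (1,1) labels seen by the vertex sums. *)
Lemma expansion_term_untwisted_ge0 (t1 t2 : flowmap) : 0 <= expansion_term untwisted t1 t2.
Proof.
rewrite /expansion_term; set E := \prod_a _; set W := \prod_w _.
have [->|/prodf_neq0 E_neq0] := eqVneq E 0; first by rewrite mul0r.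
pose M := (\sum_a (canon_edge a && (t1 a == (true, true)) : nat))%N.
have E_sign : 0 <= (-1) ^+ M * E.
  by rewrite -prodrXr -big_split /=; apply: prodr_ge0 => a _; apply: edge_weight_untwisted_sign.
have [->|/prodf_neq0 W_neq0] := eqVneq W 0; first by rewrite mulr0.
have even_count w : ~~ odd (label_count (fun v => label t1 t2 (w, v)) (true, true)).
  by apply: contra (W_neq0 w isT) => /vertex_sum_odd ->.
have W_sign : 0 <= (-1) ^+ M * W.
  have -> : M = (\sum_w (label_count (fun v => label t1 t2 (w, v)) (true, true))./2)%N.
    apply: double_inj; rewrite -(sum_label_count_diff (fun a => E_neq0 a isT)).
    rewrite (big_morph double doubleD double0); apply: eq_bigr => w _.
    by rewrite halfK (negbTE (even_count w)) subn0.
  by rewrite -prodrXr -big_split /=; apply: prodr_ge0 => w _; apply: vertex_sum_sign.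
by have := mulr_ge0 E_sign W_sign; rewrite mulrACA -expr2 sqrr_sign mul1r.
Qed.

Lemma expansion_term_le c (t1 t2 : flowmap) :
  expansion_term c t1 t2 <= expansion_term untwisted t1 t2.
Proof.
set s := \prod_a (-1) ^+ [&& canon_edge a, c a.1 a.2 & t1 a == (true, true)] : int.
have -> : expansion_term c t1 t2 = s * expansion_term untwisted t1 t2.
  by rewrite /expansion_term mulrA -big_split /=; congr (_ * _); apply: eq_bigr => a _;
    rewrite edge_weight_twist mulrC.
have norm_s : `|s| = 1 by rewrite normr_prod big1 // => a _; rewrite normrX normrN1 expr1n.
apply: le_trans (ler_norm _) _.
by rewrite normrM norm_s mul1r ger0_norm // expansion_term_untwisted_ge0.
Qed.

Lemma card_inflow_ok_le c :
  (#|[set y | inflow_ok c y]| <= #|[set y | inflow_ok untwisted y]|)%N.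
Proof.
have pos : 0 < 2 ^+ #|[set a | canon_edge a]| :> int by rewrite exprn_gt0.
rewrite -(ler_nat int) -(ler_pM2r pos) !sum_inflow_ok.
by apply: ler_sum => t1 _; apply: ler_sum => t2 _; apply: expansion_term_le.
Qed.

End Inflow.

Unset Implicit Arguments.

Theorem theorem1p7 (V : finType) (e : rel V) (r : V -> int)
    (h : rel (V * bool)) :
  simple_graph e -> is_two_cover e h ->
  (eps h (lift_vec r) <= eps (two_copies e) (lift_vec r))%N.
Proof.
move=> [e_sym e_irr] /two_cover_twisted[c c_sym h_c].
rewrite (eq_eps _ h_c) (eq_eps _ (two_copies_untwisted e)).
rewrite !eps_twisted_cover //.
exact: card_inflow_ok_le.
Qed.
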